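(* Let $\mathcal{P}$ be a finite nonempty set and $\mathcal{N}$ a finite set of stochastic trees. If there exists an LPTS with $k$ states that is consistent with $\mathcal{P}$ and $\mathcal{N}$, then there is a consistent partition of $S_\mathcal{P}$ with at most $2^k$ classes.
   Context: An LPTS is a tuple $\langle S,s^0,\alpha,\tau\rangle$ with finite state set $S$, start state $s^0$, finite action set $\alpha$, finite $\tau\subseteq S\times\alpha\times\mathrm{Dist}(S)$, where $\mathrm{Dist}(S)$ is the set of discrete probability distributions over $S$ (rational probabilities); write $s\xrightarrow{a}\mu$. A stochastic tree is an LPTS whose start state is in the support of no transition's distribution and every other state is in the support of exactly one transition's distribution. Strong simulation: for $\mu_1\in\mathrm{Dist}(S_1)$, $\mu_2\in\mathrm{Dist}(S_2)$, $R\subseteq S_1\times S_2$, $\mu_1\sqsubseteq_R\mu_2$ iff there is $w:S_1\times S_2\to\mathbb{Q}\cap[0,1]$ with $\sum_{s_2}w(s_1,s_2)=\mu_1(s_1)$, $\sum_{s_1}w(s_1,s_2)=\mu_2(s_2)$ and $w(s_1,s_2)>0\Rightarrow s_1Rs_2$; $R$ is a strong simulation iff $s_1Rs_2$ and $s_1\xrightarrow{a}\mu_1$ imply some $s_2\xrightarrow{a}\mu_2$ with $\mu_1\sqsubseteq_R\mu_2$; $L_1\preceq L_2$ iff a strong simulation relates the start states. An LPTS $L$ is consistent with $\mathcal{P},\mathcal{N}$ iff $P\preceq L$ for all $P\in\mathcal{P}$ and $N\not\preceq L$ for all $N\in\mathcal{N}$. $S_\mathcal{P}$ is the (disjoint)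 union of the state sets of the trees in $\mathcal{P}$. For a partition $\Pi$ of $S_\mathcal{P}$ with classes $E_\Pi$ and class $[s]$ of $s$, in which all start states of trees in $\mathcal{P}$ lie in one class, the quotient $\mathcal{P}/\Pi$ is the LPTS with states $E_\Pi$, start state that common class, actions $\bigcup_{P\in\mathcal{P}}\alpha_P$, and a transition $e\xrightarrow{a}\mu$ iff some $P\in\mathcal{P}$ has $s\xrightarrow{a}\mu_p$ with $[s]=e$ and $\mu(e')=\sum_{s'\in e'}\mu_p(s')$ for all $e'$. Such a partition $\Pi$ is consistent iff $N\not\preceq\mathcal{P}/\Pi$ for every $N\in\mathcal{N}$; its size is the number of classes. *)

From HB Require Import structures.
From mathcomp Require Import all_boot all_order all_algebra.
Set Implicit Arguments. Unset Strict Implicit. Unset Printing Implicit Defensive.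
Import Order.TTheory GRing.Theory Num.Theory.
Local Open Scope ring_scope.

Record lpts (Act : eqType) := LPTS {
  st : finType;
  start : st;
  alpha : seq Act;
  trans : seq (st * Act * {ffun st -> rat})
}.

Definition is_dist (S : finType) (mu : {ffun S -> rat}) : Prop :=
  (forall s, 0 <= mu s) /\ \sum_(s : S) mu s = 1.

(** Well-formedness: tau is a (duplicate-free) finite subset of S x alpha x Dist(S). *)
Definition is_lpts (Act : eqType) (L : lpts Act) : Prop :=
  uniq (trans L) /\
  (forall t, t \in trans L -> t.1.2 \in alpha L /\ is_dist t.2).

Definition stochastic_tree (Act : eqType) (L : lpts Act) : Prop :=
  is_lpts L /\
  (forall t, t \in trans L -> ~~ (0 < t.2 (start L))) /\
  (forall s, s != start L -> count (fun t : st L * Act * {ffun st L -> rat} => 0 < t.2 s) (trans L) = 1%N).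

Definition lift_rel (S1 S2 : finType) (R : S1 -> S2 -> Prop)
    (mu1 : {ffun S1 -> rat}) (mu2 : {ffun S2 -> rat}) : Prop :=
  exists w : {ffun S1 * S2 -> rat},
    (forall p, 0 <= w p <= 1) /\
    (forall s1, \sum_(s2 : S2) w (s1, s2) = mu1 s1) /\
    (forall s2, \sum_(s1 : S1) w (s1, s2) = mu2 s2) /\
    (forall s1 s2, 0 < w (s1, s2) -> R s1 s2).

Definition strong_simulation (Act : eqType) (L1 L2 : lpts Act)
    (R : st L1 -> st L2 -> Prop) : Prop :=
  forall s1 s2 a mu1, R s1 s2 -> (s1, a, mu1) \in trans L1 ->
    exists2 mu2, (s2, a, mu2) \in trans L2 & lift_rel R mu1 mu2.

Definition simulated (Act : eqType) (L1 L2 : lpts Act) : Prop :=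
  exists R : st L1 -> st L2 -> Prop,
    strong_simulation R /\ R (start L1) (start L2).

(** Consistency with positive examples P (indexed by 'I_n.+1, hence nonempty)
    and negative examples N. *)
Definition consistent (Act : eqType) (n m : nat)
    (P : 'I_n.+1 -> lpts Act) (N : 'I_m -> lpts Act) (L : lpts Act) : Prop :=
  (forall i, simulated (P i) L) /\ (forall j, ~ simulated (N j) L).

Definition SP (Act : eqType) (n : nat) (P : 'I_n.+1 -> lpts Act) : finType :=
  {i : 'I_n.+1 & st (P i)}.

Definition inSP (Act : eqType) (n : nat) (P : 'I_n.+1 -> lpts Act)
    (i : 'I_n.+1) (s : st (P i)) : SP P := Tagged (fun i => st (P i)) s.

(** A partition of S_P into c classes is represented by a surjective
    class-labelling function [cls : SP P -> 'I_c] (class of s = cls s). *)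
Definition partition_of (Act : eqType) (n : nat) (P : 'I_n.+1 -> lpts Act)
    (c : nat) (cls : SP P -> 'I_c) : Prop :=
  (forall e : 'I_c, exists s, cls s = e) /\
  (forall i j : 'I_n.+1, cls (inSP (start (P i))) = cls (inSP (start (P j)))).

Section Quotient.
Variables (Act : eqType) (n : nat) (P : 'I_n.+1 -> lpts Act) (c : nat)
          (cls : SP P -> 'I_c).

Definition qdist (i : 'I_n.+1) (mu : {ffun st (P i) -> rat}) : {ffun 'I_c -> rat} :=
  [ffun e => \sum_(s' : st (P i) | cls (inSP s') == e) mu s'].

(** The quotient P/Pi. The start state is the class of the start state of
    the first tree (all start states lie in one class by [partition_of]). *)
Definition quotient : lpts Act :=
  @LPTS Act 'I_c
    (cls (inSP (start (P ord0))))
    (undup (flatten [seq alpha (P i) | i <- enum 'I_n.+1]))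
    (undup (flatten [seq [seq (cls (inSP t.1.1), t.1.2, qdist t.2) | t <- trans (P i)]
                    | i <- enum 'I_n.+1])).
End Quotient.

Definition consistent_partition (Act : eqType) (n m : nat)
    (P : 'I_n.+1 -> lpts Act) (N : 'I_m -> lpts Act)
    (c : nat) (cls : SP P -> 'I_c) : Prop :=
  forall j, ~ simulated (N j) (quotient cls).

(** Label each non-start state of a tree in [P] by the set of states of a
    consistent [L] that simulate it, and each start state by [{start L}]; at
    most [2^k] labels occur, and they induce the partition. "[q] lies in the
    label of the class" is then a strong simulation of the quotient by [L]: a
    quotient step comes from a tree step, the matching step of [L] is pushed
    forward along the partition, and targets of tree steps are never start
    states. So a negative example simulated by the quotient would, by
    transitivity, be simulated by [L]. *)

From HB Require Import structures.
From mathcomp Require Import all_boot all_order all_algebra.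
From mathcomp Require Import boolp.
Set Implicit Arguments. Unset Strict Implicit. Unset Printing Implicit Defensive.
Import Order.TTheory GRing.Theory Num.Theory.
Local Open Scope ring_scope.

Lemma ler_sum_term (S : finType) (F : S -> rat) x :
  (forall y, 0 <= F y) -> F x <= \sum_y F y.
Proof. by move=> F_ge0; rewrite (bigD1 x) //= lerDl sumr_ge0. Qed.

Lemma weight_le1 (S1 S2 : finType) (w : {ffun S1 * S2 -> rat}) (mu : {ffun S2 -> rat}) :
  is_dist mu -> (forall p, 0 <= w p) ->
  (forall s2, \sum_s1 w (s1, s2) = mu s2) -> forall p, w p <= 1.
Proof.
move=> [_ mu_sum1] w_ge0 w_col [s1 s2].
have mu_ge0 s : 0 <= mu s by rewrite -w_col sumr_ge0.
rewrite -mu_sum1 (le_trans (@ler_sum_term _ (fun s => w (s, s2)) s1 _)) //.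
by rewrite w_col ler_sum_term.
Qed.

Lemma lift_rel_mono (S1 S2 : finType) (R R' : S1 -> S2 -> Prop) mu1 mu2 :
  (forall s1 s2, R s1 s2 -> R' s1 s2) -> lift_rel R mu1 mu2 -> lift_rel R' mu1 mu2.
Proof.
move=> RR' [w [w01 [w_row [w_col w_R]]]].
by exists w; do 3!split=> //; move=> s1 s2 /w_R/RR'.
Qed.

Lemma lift_rel_comp (S1 S2 S3 : finType) (R1 : S1 -> S2 -> Prop) (R2 : S2 -> S3 -> Prop)
    mu1 mu2 mu3 :
  is_dist mu3 -> lift_rel R1 mu1 mu2 -> lift_rel R2 mu2 mu3 ->
  lift_rel (fun s1 s3 => exists s2, R1 s1 s2 /\ R2 s2 s3) mu1 mu3.
Proof.
move=> d3 [w1 [w1_01 [w1_row [w1_col w1_R]]]] [w2 [w2_01 [w2_row [w2_col w2_R]]]].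
have w1_ge0 p : 0 <= w1 p by case/andP: (w1_01 p).
have w2_ge0 p : 0 <= w2 p by case/andP: (w2_01 p).
have mu2_ge0 b : 0 <= mu2 b by rewrite -w1_col sumr_ge0.
have w1_null a b : mu2 b = 0 -> w1 (a, b) = 0.
  move=> mu2b0; apply: (psumr_eq0P (P := predT) (F := fun a => w1 (a, b))) => //.
  by rewrite w1_col.
have w2_null b c : mu2 b = 0 -> w2 (b, c) = 0.
  move=> mu2b0; apply: (psumr_eq0P (P := predT) (F := fun c => w2 (b, c))) => //.
  by rewrite w2_row.
(* Route the mass [w1 (a, b)] from [b] to each [c] in the proportions [w2 (b, c) / mu2 b]. *)
pose w := [ffun p : S1 * S3 => \sum_b w1 (p.1, b) * w2 (b, p.2) / mu2 b].
have w_ge0 p : 0 <= w p.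
  by rewrite ffunE sumr_ge0 // => b _; rewrite !mulr_ge0 // invr_ge0.
have w_col c : \sum_a w (a, c) = mu3 c.
  under eq_bigr do rewrite ffunE /=.
  rewrite exchange_big /= -w2_col; apply: eq_bigr => b _.
  rewrite -!mulr_suml w1_col.
  have [mu2b0 | mu2b_neq0] := eqVneq (mu2 b) 0; first by rewrite w2_null // mulr0 mul0r.
  by rewrite mulrC mulrA mulVf ?mul1r.
exists w; split; last split; last split.
- by move=> p; rewrite w_ge0 (weight_le1 d3).
- move=> a; under eq_bigr do rewrite ffunE /=.
  rewrite exchange_big /= -w1_row; apply: eq_bigr => b _.
  under eq_bigr do rewrite mulrAC.
  rewrite -mulr_sumr w2_row.
  have [mu2b0 | mu2b_neq0] := eqVneq (mu2 b) 0; first by rewrite w1_null // !mul0r.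
  by rewrite divfK.
- exact: w_col.
- move=> a c; rewrite ffunE /= => /gt_eqF/negbT/eqP.
  case/psumr_neq0P => [b _ | b /= w_pos]; first by rewrite !mulr_ge0 // invr_ge0.
  exists b; split; [apply: w1_R | apply: w2_R]; rewrite lt0r ?w1_ge0 ?w2_ge0 andbT;
    by apply: contraTneq w_pos => ->; rewrite ?mul0r ?mulr0 ?mul0r ltxx.
Qed.

Lemma lift_rel_map (S1 S S2 : finType) (f : S1 -> S) (R : S1 -> S2 -> Prop) mu1 mu2 :
  is_dist mu2 -> lift_rel R mu1 mu2 ->
  lift_rel (fun e s2 => exists s1, [/\ f s1 = e, 0 < mu1 s1 & R s1 s2])
    [ffun e => \sum_(s1 | f s1 == e) mu1 s1] mu2.
Proof.
move=> d2 [w [w01 [w_row [w_col w_R]]]].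
have w_ge0 p : 0 <= w p by case/andP: (w01 p).
pose wf := [ffun p : S * S2 => \sum_(s1 | f s1 == p.1) w (s1, p.2)].
have wf_ge0 p : 0 <= wf p by rewrite ffunE sumr_ge0.
have wf_col s2 : \sum_e wf (e, s2) = mu2 s2.
  under eq_bigr do rewrite ffunE /=.
  by rewrite -w_col (partition_big f predT).
exists wf; split; last split; last split.
- by move=> p; rewrite wf_ge0 (weight_le1 d2).
- move=> e; rewrite ffunE; under eq_bigr do rewrite ffunE /=.
  by rewrite exchange_big /=; apply: eq_bigr => s1 _; exact: w_row.
- exact: wf_col.
- move=> e s2; rewrite ffunE /= => /gt_eqF/negbT/eqP.
  case/psumr_neq0P => [s1 _ | s1 /andP[/eqP fs1 w_pos]]; first exact: w_ge0.
  exists s1; split=> //; last exact: w_R.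
  by rewrite -w_row (lt_le_trans w_pos) // (@ler_sum_term _ (fun s => w (s1, s))).
Qed.

Lemma simulated_trans (Act : eqType) (L1 L2 L3 : lpts Act) :
  is_lpts L3 -> simulated L1 L2 -> simulated L2 L3 -> simulated L1 L3.
Proof.
move=> [_ L3_dist] [R1 [sim1 R1_start]] [R2 [sim2 R2_start]].
exists (fun s1 s3 => exists s2, R1 s1 s2 /\ R2 s2 s3); split; last by exists (start L2).
move=> s1 s3 a mu1 [s2 [R1s R2s]] step1.
have [mu2 step2 lift12] := sim1 _ _ _ _ R1s step1.
have [mu3 step3 lift23] := sim2 _ _ _ _ R2s step2.
exists mu3 => //; apply: lift_rel_comp lift12 lift23.
by have [] := L3_dist _ step3.
Qed.

Definition simulates_state (Act : eqType) (A B : lpts Act) (x : st A) (q : st B) : Prop :=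
  exists2 R, strong_simulation R & R x q.

Section SimulationClasses.
Variables (Act : eqType) (n : nat) (P : 'I_n.+1 -> lpts Act) (L : lpts Act).
Hypotheses (P_tree : forall i, stochastic_tree (P i)) (L_lpts : is_lpts L)
           (P_sim : forall i, simulated (P i) L).

(* Start states get [{start L}] rather than their simulation set, so that all of them share a class. *)
Definition sim_class (s : SP P) : {set st L} :=
  if tagged s == start (P (tag s)) then [set start L]
  else [set q | `[< simulates_state (tagged s) q >]].

Lemma sim_class_start i : sim_class (inSP (start (P i))) = [set start L].
Proof. by rewrite /sim_class /= eqxx. Qed.

Lemma sim_classP (s : SP P) (q : st L) : q \in sim_class s -> simulates_state (tagged s) q.
Proof.
rewrite /sim_class; case: eqP => [-> | _]; last by rewrite inE => /asboolP.
by rewrite inE => /eqP ->; have [R [sim_R R_start]] := P_sim (tag s); exists R.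
Qed.

Lemma mem_sim_class (s : SP P) (q : st L) :
  tagged s != start (P (tag s)) -> simulates_state (tagged s) q -> q \in sim_class s.
Proof. by rewrite /sim_class => /negPf -> sim_q; rewrite inE; apply/asboolP. Qed.

Lemma quotient_simulated c (cls : SP P -> 'I_c) (label : 'I_c -> {set st L}) :
  (forall s, label (cls s) = sim_class s) -> simulated (quotient cls) L.
Proof.
move=> label_cls; exists (fun e q => q \in label e); split; last first.
  by rewrite /= label_cls sim_class_start set11.
move=> e q a mu q_in /=; rewrite mem_undup => /flatten_mapP[i _ /mapP[[[x a'] mu'] step]].
case=> e_eq a_eq mu_eq; subst e a mu.
rewrite label_cls in q_in; have [R sim_R Rxq] := sim_classP q_in.
have [mu2 step2 lift] := sim_R _ _ _ _ Rxq step.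
exists mu2 => //; apply: lift_rel_mono (lift_rel_map _ (L_lpts.2 _ step2).2 lift).
move=> e q' [s' [<- mu's' Rs']]; rewrite label_cls; apply: mem_sim_class => /=.
  by apply: contraTneq mu's' => ->; have [_ [no_in _]] := P_tree i; exact: no_in step.
by exists R.
Qed.

End SimulationClasses.

Lemma class_labelling (T U : finType) (f : T -> U) : T ->
  exists c (cls : T -> 'I_c) (label : 'I_c -> U),
    [/\ forall e, exists t, cls t = e, forall t, label (cls t) = f t & injective label].
Proof.
move=> t0; have ft0_in : f t0 \in [set f t | t : T] by apply: imset_f.
exists #|[set f t | t : T]|, (fun t => enum_rank_in ft0_in (f t)), enum_val.
split=> [e | t | ]; last exact: enum_val_inj.
  by have /imsetP[t _ ft] := enum_valP e; exists t; rewrite -ft enum_valK_in.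
by rewrite enum_rankK_in ?imset_f.
Qed.

Lemma card_set_of_sets (U : finType) : #|{set U}| = (2 ^ #|U|)%N.
Proof. by have := card_powerset [set: U]; rewrite powersetT !cardsT. Qed.

Theorem corollary1 (Act : eqType) (n m : nat)
    (P : 'I_n.+1 -> lpts Act) (N : 'I_m -> lpts Act) (k : nat) :
  (forall i, stochastic_tree (P i)) ->
  (forall j, stochastic_tree (N j)) ->
  (exists L : lpts Act, is_lpts L /\ #|st L| = k /\ consistent P N L) ->
  exists (c : nat) (cls : SP P -> 'I_c),
    partition_of cls /\ consistent_partition N cls /\ (c <= 2 ^ k)%N.
Proof.
(* The negative examples need not be trees. *)
move=> P_tree _ [L [L_lpts [card_L [P_sim N_not_sim]]]].
have [c [cls [label [cls_surj label_cls label_inj]]]] :=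
  class_labelling (sim_class L) (inSP (start (P ord0))).
exists c, cls; split; last split.
- by split=> // i j; apply: label_inj; rewrite !label_cls !sim_class_start.
- move=> j N_sim; apply: (N_not_sim j); apply: (simulated_trans L_lpts N_sim).
  exact (quotient_simulated P_tree L_lpts P_sim label_cls).
- by rewrite -card_L -card_set_of_sets -{1}[c]card_ord; apply: leq_card label_inj.
Qed.
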